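(* Let $G_1,G_2$ be groups with finite generating sets $S_1,S_2$ respectively (each symmetric and not containing the identity), and let $S=(S_1\times\{e\})\cup(\{e\}\times S_2)$ be the split generating set of $G_1\times G_2$. Then for all $(x,y)\in G_1\times G_2$, $$\mathrm{Av}((x,y))=\frac{|S_1|\,\mathrm{Av}(x)+|S_1|\,|y|+|S_2|\,|x|+|S_2|\,\mathrm{Av}(y)}{|S_1|+|S_2|},$$ where $\mathrm{Av}((x,y))$ is computed in $(G_1\times G_2,S)$, $\mathrm{Av}(x)$ and $|x|$ in $(G_1,S_1)$, and $\mathrm{Av}(y)$ and $|y|$ in $(G_2,S_2)$.
   Context: For a group $G$ with finite generating set $S$, $|x|$ denotes the word length of $x$ with respect to $S$, and $\mathrm{Av}(g)=\frac{1}{|S|}\sum_{a\in S}|a^{-1}ga|$. *)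

From Stdlib Require Import Reals List ClassicalEpsilon.
Import ListNotations.
Open Scope R_scope.

Record Grp := {
  gcar :> Type;
  gmul : gcar -> gcar -> gcar;
  ginv : gcar -> gcar;
  gone : gcar;
  gmulA : forall x y z, gmul x (gmul y z) = gmul (gmul x y) z;
  gmul1 : forall x, gmul gone x = x;
  gmulV : forall x, gmul (ginv x) x = gone
}.

Arguments gmul {g}.
Arguments ginv {g}.
Arguments gone {g}.

Definition prodGrp (G1 G2 : Grp) : Grp.
Proof.
  refine {| gcar := (G1 * G2)%type;
            gmul := fun p q => (gmul (fst p) (fst q), gmul (snd p) (snd q));
            ginv := fun p => (ginv (fst p), ginv (snd p));
            gone := (gone, gone) |}.
  - intros [a b] [c d] [e f]; simpl; now rewrite !gmulA.
  - intros [a b]; simpl; now rewrite !gmul1.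
  - intros [a b]; simpl; now rewrite !gmulV.
Defined.

Definition word_eval {G : Grp} (w : list G) : G :=
  fold_right (fun a acc => gmul a acc) gone w.

(* S is a finite symmetric generating set of G not containing the identity;
   the finite set is represented by a duplicate-free list. *)
Definition gen_set (G : Grp) (S : list G) : Prop :=
  NoDup S /\
  (forall a, In a S -> In (ginv a) S) /\
  ~ In gone S /\
  (forall x : G, exists w : list G, Forall (fun a => In a S) w /\ word_eval w = x).

Definition is_word_length (G : Grp) (S : list G) (x : G) (n : nat) : Prop :=
  (exists w : list G, Forall (fun a => In a S) w /\ word_eval w = x /\ length w = n) /\
  (forall w : list G, Forall (fun a => In a S) w -> word_eval w = x -> (n <= length w)%nat).

(* |x| : the word length (well defined when S generates G). *)
Definition wlen (G : Grp) (S : list G) (x : G) : nat :=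
  epsilon (inhabits 0%nat) (is_word_length G S x).

Definition Av (G : Grp) (S : list G) (g : G) : R :=
  / INR (length S) *
  fold_right Rplus 0 (map (fun a => INR (wlen G S (gmul (ginv a) (gmul g a)))) S).

Definition split_gen (G1 G2 : Grp) (S1 : list G1) (S2 : list G2) : list (prodGrp G1 G2) :=
  map (fun a => (a, gone) : prodGrp G1 G2) S1 ++ map (fun b => (gone, b) : prodGrp G1 G2) S2.

(* A word in the split generating set is a shuffle of a word in S1 x {e} and a
   word in {e} x S2, so |(x, y)| = |x| + |y|.  Conjugating (x, y) by (a, e)
   gives (a^-1 x a, y) and by (e, b) gives (x, b^-1 y b); summing the lengths
   of these conjugates over the |S1| + |S2| generators yields the formula. *)

From Stdlib Require Import Reals List Wf_nat Lia Classical ClassicalEpsilon.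
Import ListNotations.
Open Scope R_scope.

Section GroupFacts.
Variable G : Grp.

Lemma gmulVr (x : G) : gmul x (ginv x) = gone.
Proof.
  rewrite <- (gmul1 G (gmul x (ginv x))), <- (gmulV G (ginv x)) at 1.
  rewrite <- gmulA, (gmulA _ (ginv x) x), gmulV, gmul1.
  apply gmulV.
Qed.

Lemma gmul1r (x : G) : gmul x gone = x.
Proof. now rewrite <- (gmulV G x), gmulA, gmulVr, gmul1. Qed.

Lemma ginv1 : ginv (@gone G) = gone.
Proof. rewrite <- (gmul1r (ginv gone)). apply gmulV. Qed.

Lemma word_eval_app (u v : list G) :
  word_eval (u ++ v) = gmul (word_eval u) (word_eval v).
Proof.
  induction u as [|a u IH]; simpl.
  - now rewrite gmul1.
  - now rewrite IH, gmulA.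
Qed.

Lemma wlen_unique (S : list G) (x : G) (n : nat) :
  is_word_length G S x n -> wlen G S x = n.
Proof.
  intros Hn.
  assert (Hw : is_word_length G S x (wlen G S x)).
  { unfold wlen. apply epsilon_spec. now exists n. }
  destruct Hn as [[w [Sw [ew lw]]] Hmin_n].
  destruct Hw as [[v [Sv [ev lv]]] Hmin_w].
  specialize (Hmin_n v Sv ev). specialize (Hmin_w w Sw ew). lia.
Qed.

Lemma is_word_length_wlen (S : list G) (x : G) :
  gen_set G S -> is_word_length G S x (wlen G S x).
Proof.
  intros (_ & _ & _ & Hgen).
  set (P n := exists w, Forall (fun a => In a S) w /\ word_eval w = x /\ length w = n).
  assert (HP : exists n, P n).
  { destruct (Hgen x) as [w [Sw ew]]. now exists (length w), w. }
  destruct (dec_inh_nat_subset_has_unique_least_element P (fun n => classic (P n)) HP)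
    as [n [[Pn Hleast] _]].
  assert (Hn : is_word_length G S x n).
  { split; [exact Pn|]. intros w Sw ew. apply Hleast. now exists w. }
  now rewrite (wlen_unique S x n Hn).
Qed.

End GroupFacts.

Section SplitProduct.
Variables (G1 G2 : Grp) (S1 : list G1) (S2 : list G2).

Local Notation G := (prodGrp G1 G2).
Let inl1 (a : G1) : G := (a, gone).
Let inr2 (b : G2) : G := (gone, b).

Lemma word_eval_inl (u : list G1) : word_eval (map inl1 u) = (word_eval u, gone) :> G.
Proof.
  induction u as [|a u IH]; [reflexivity|].
  change (gmul (inl1 a) (word_eval (map inl1 u)) = (gmul a (word_eval u), gone)).
  rewrite IH. simpl. now rewrite gmul1.
Qed.

Lemma word_eval_inr (v : list G2) : word_eval (map inr2 v) = (gone, word_eval v) :> G.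
Proof.
  induction v as [|b v IH]; [reflexivity|].
  change (gmul (inr2 b) (word_eval (map inr2 v)) = (gone, gmul b (word_eval v))).
  rewrite IH. simpl. now rewrite gmul1.
Qed.

Lemma split_word_project (w : list G) :
  Forall (fun c => In c (split_gen G1 G2 S1 S2)) w ->
  exists u v, Forall (fun a => In a S1) u /\ Forall (fun b => In b S2) v /\
    word_eval u = fst (word_eval w) /\ word_eval v = snd (word_eval w) /\
    (length u + length v = length w)%nat.
Proof.
  induction w as [|c w IH]; intros Hw.
  - now exists [], [].
  - inversion Hw as [|? ? Sc Sw]; subst.
    destruct (IH Sw) as (u & v & Su & Sv & eu & ev & luv).
    unfold split_gen in Sc; apply in_app_or in Sc.
    destruct Sc as [Sc|Sc]; apply in_map_iff in Sc; destruct Sc as [a [<- Sa]].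
    + exists (a :: u), v; simpl. rewrite eu, ev, gmul1. repeat split; auto using Forall_cons.
    + exists u, (a :: v); simpl. rewrite eu, ev, gmul1. repeat split; auto using Forall_cons.
      rewrite Nat.add_succ_r; now f_equal.
Qed.

Lemma split_word_embed (u : list G1) (v : list G2) :
  Forall (fun a => In a S1) u -> Forall (fun b => In b S2) v ->
  Forall (fun c => In c (split_gen G1 G2 S1 S2)) (map inl1 u ++ map inr2 v).
Proof.
  intros Su Sv; unfold split_gen.
  apply Forall_app; split; apply Forall_map; eapply Forall_impl; try eassumption;
    intros c Sc; apply in_or_app; [left | right]; now apply in_map.
Qed.

Lemma map_split_gen {A : Type} (f : G -> A) :
  map f (split_gen G1 G2 S1 S2) = map (fun a => f (inl1 a)) S1 ++ map (fun b => f (inr2 b)) S2.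
Proof. unfold split_gen; now rewrite map_app, !map_map. Qed.

Lemma length_split_gen : length (split_gen G1 G2 S1 S2) = (length S1 + length S2)%nat.
Proof. unfold split_gen; now rewrite length_app, !length_map. Qed.

Hypotheses (h1 : gen_set G1 S1) (h2 : gen_set G2 S2).

Lemma wlen_split_gen (x : G1) (y : G2) :
  wlen G (split_gen G1 G2 S1 S2) (x, y) = (wlen G1 S1 x + wlen G2 S2 y)%nat.
Proof.
  apply wlen_unique.
  destruct (is_word_length_wlen G1 S1 x h1) as [[u (Su & eu & lu)] min1].
  destruct (is_word_length_wlen G2 S2 y h2) as [[v (Sv & ev & lv)] min2].
  split.
  - exists (map inl1 u ++ map inr2 v); repeat split.
    + now apply split_word_embed.
    + rewrite word_eval_app, word_eval_inl, word_eval_inr; simpl.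
      now rewrite eu, ev, gmul1r, gmul1.
    + rewrite length_app, !length_map; lia.
  - intros w Sw ew.
    destruct (split_word_project w Sw) as (u' & v' & Su' & Sv' & eu' & ev' & luv).
    rewrite ew in eu', ev'.
    specialize (min1 u' Su' eu'). specialize (min2 v' Sv' ev'). lia.
Qed.

End SplitProduct.

Notation sumR l := (fold_right Rplus 0 l).

Lemma sumR_app (l1 l2 : list R) : sumR (l1 ++ l2) = sumR l1 + sumR l2.
Proof. induction l1 as [|r l1 IH]; simpl; [ring | rewrite IH; ring]. Qed.

Lemma sumR_map_addr {A : Type} (f : A -> R) (c : R) (l : list A) :
  sumR (map (fun a => f a + c) l) = sumR (map f l) + INR (length l) * c.
Proof.
  induction l as [|a l IH]; [simpl; ring|].
  cbn [map length fold_right]. rewrite IH, S_INR. ring.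
Qed.

Lemma sumR_map_addl {A : Type} (f : A -> R) (c : R) (l : list A) :
  sumR (map (fun a => c + f a) l) = INR (length l) * c + sumR (map f l).
Proof.
  rewrite (map_ext _ (fun a => f a + c)) by (intro; ring).
  rewrite sumR_map_addr. ring.
Qed.

Lemma length_mul_Av (G : Grp) (S : list G) (g : G) :
  INR (length S) * Av G S g =
  sumR (map (fun a => INR (wlen G S (gmul (ginv a) (gmul g a)))) S).
Proof.
  unfold Av; destruct S as [|a S]; [simpl; ring|].
  field. apply not_0_INR. discriminate.
Qed.

Theorem mainTheorem8 (G1 G2 : Grp) (S1 : list G1) (S2 : list G2)
  (h1 : gen_set G1 S1) (h2 : gen_set G2 S2) (x : G1) (y : G2) :
  Av (prodGrp G1 G2) (split_gen G1 G2 S1 S2) (x, y) =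
  (INR (length S1) * Av G1 S1 x + INR (length S1) * INR (wlen G2 S2 y)
   + INR (length S2) * INR (wlen G1 S1 x) + INR (length S2) * Av G2 S2 y)
  / (INR (length S1) + INR (length S2)).
Proof.
  rewrite !length_mul_Av.
  unfold Av.
  rewrite length_split_gen, plus_INR, map_split_gen, sumR_app.
  erewrite map_ext with (l := S1), map_ext with (l := S2).
  2, 3: intro a; cbn; rewrite wlen_split_gen, ginv1, gmul1r, gmul1, plus_INR by assumption;
        reflexivity.
  rewrite sumR_map_addr, sumR_map_addl.
  unfold Rdiv; ring.
Qed.
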